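(* Let $(A,\mathfrak m)$ be a local ring and $I$ a proper ideal of $A$. Then $A \bowtie I$ is a Prüfer ring if and only if $A$ is a Prüfer ring and $I = aI$ for all $a \in \mathfrak m \setminus Z(A)$.
   Context: All rings are commutative with identity. For an ideal $I$ of a ring $A$, the amalgamated duplication of $A$ along $I$ is the subring $A \bowtie I := \{(a, a+i) : a \in A, i \in I\}$ of $A\times A$. $Z(A)$ is the set of zero-divisors of $A$. An ideal is regular if it contains a regular element (non-zero-divisor). A ring $R$ is a Prüfer ring if every finitely generated regular ideal of $R$ is invertible. *)

From HB Require Import structures.
From mathcomp Require Import all_boot all_order all_algebra.
Set Implicit Arguments. Unset Strict Implicit. Unset Printing Implicit Defensive.
Import GRing.Theory.
Local Open Scope ring_scope.

(* All notions are stated relative to a subring S (given as a predicate) of an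
   ambient commutative ring R; the ring "S" carries the induced operations. *)
Section Defs.
Variable R : comNzRingType.

Definition is_unit (x : R) : Prop := exists y : R, x * y = 1.

Definition regular_in (S : R -> Prop) (x : R) : Prop :=
  S x /\ forall y, S y -> x * y = 0 -> y = 0.

Definition zero_divisor_in (S : R -> Prop) (x : R) : Prop :=
  S x /\ exists y, S y /\ y <> 0 /\ x * y = 0.

Definition ideal_in (S : R -> Prop) (I : R -> Prop) : Prop :=
  (forall x, I x -> S x) /\ I 0 /\
  (forall x y, I x -> I y -> I (x + y)) /\
  (forall r x, S r -> I x -> I (r * x)).

Definition fin_gen_in (S : R -> Prop) (I : R -> Prop) : Prop :=
  exists g : seq R, (forall k, (k < size g)%N -> S g`_k) /\
    forall x, I x <-> exists c : seq R, size c = size g /\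
      (forall k, (k < size c)%N -> S c`_k) /\
      x = \sum_(k < size g) c`_k * g`_k.

Definition regular_ideal_in (S : R -> Prop) (I : R -> Prop) : Prop :=
  exists x, I x /\ regular_in S x.

(* Invertibility of an ideal I of S in the total ring of quotients Q(S):
   I * I^{-1} = S, where I^{-1} = {q in Q(S) | q I ⊆ S}.  Since
   I * I^{-1} ⊆ S is an S-submodule, this amounts to 1 ∈ I * I^{-1}, i.e.
   1 = Σ a_k q_k with a_k ∈ I, q_k ∈ I^{-1}.  Writing the q_k over a common
   regular denominator s (q_k = r_k / s with r_k, s ∈ S, s regular):
   r_k * i ∈ s S for all i ∈ I, and Σ a_k r_k = s. *)
Definition invertible_in (S : R -> Prop) (I : R -> Prop) : Prop :=
  exists s : R, regular_in S s /\
  exists a r : seq R, size a = size r /\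
    (forall k, (k < size a)%N ->
       I a`_k /\ S r`_k /\
       (forall i, I i -> exists t, S t /\ r`_k * i = s * t)) /\
    \sum_(k < size a) a`_k * r`_k = s.

Definition Prufer_in (S : R -> Prop) : Prop :=
  forall I, ideal_in S I -> fin_gen_in S I -> regular_ideal_in S I ->
    invertible_in S I.

Definition whole : R -> Prop := fun _ => True.

Definition Prufer : Prop := Prufer_in whole.

End Defs.

Definition amal_dup (A : comNzRingType) (I : A -> Prop) : (A * A)%type -> Prop :=
  fun p => exists a i, I i /\ p = (a, a + i).

(** In a local ring every invertible ideal is principal, and a principal
    finitely generated regular ideal is generated by one of its generators;
    so a local ring is Prüfer iff each finitely generated regular ideal is
    generated by one of its generators.  [A ⋈ I] is local with maximal ideal
    [{(a, a + i) | a ∈ m}].  For an ideal [J] of [A], the diagonal copy of its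
    generators shows that [A] is Prüfer, and the ideal [((a, a), (0, x))]
    must be generated by [(a, a)], which gives [x ∈ aI].  Conversely, if [J]
    is an ideal of [A ⋈ I], the first projections of its generators generate
    a principal ideal of [A], say by [(G_k).1]; then [G_k] generates [J]
    because [I ⊆ (G_k).2 I], which is where [I = aI] for regular [a ∈ m]
    is used. *)
From mathcomp Require Import all_boot all_order all_algebra.
From mathcomp Require Import ring.
From Stdlib Require Import Classical.
Import GRing.Theory.
Local Open Scope ring_scope.

Set Implicit Arguments. Unset Strict Implicit. Unset Printing Implicit Defensive.

Section SubringIdeals.
Variables (R : comNzRingType) (S : R -> Prop).

Definition subring := [/\ S 0, S 1, (forall x y, S x -> S y -> S (x + y)),
  (forall x y, S x -> S y -> S (x * y)) & (forall x, S x -> S (- x))].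

Definition local_in (M : R -> Prop) :=
  [/\ ideal_in S M, ~ M 1 & forall x, S x -> ~ M x -> exists2 y, S y & x * y = 1].

Definition gen_ideal (g : seq R) (x : R) : Prop :=
  exists c : seq R, size c = size g /\
      (forall k, (k < size c)%N -> S c`_k) /\
      x = \sum_(k < size g) c`_k * g`_k.

Definition generates_in (z : R) (J : R -> Prop) :=
  J z /\ forall w, J w -> exists t, S t /\ w = z * t.

Hypothesis HS : subring.

Lemma subringD x y : S x -> S y -> S (x + y).
Proof. by case: HS => _ _ SD _ _; apply: SD. Qed.

Lemma subringM x y : S x -> S y -> S (x * y).
Proof. by case: HS => _ _ _ SM _; apply: SM. Qed.

Lemma subringB x y : S x -> S y -> S (x - y).
Proof. by case: HS => _ _ SD _ SN Sx Sy; apply: SD => //; apply: SN. Qed.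

Lemma subring_sum n (F : 'I_n -> R) : (forall k, S (F k)) -> S (\sum_(k < n) F k).
Proof. by case: HS => S0 _ SD _ _ SF; apply: (big_ind S). Qed.

Section Ideal.
Variable J : R -> Prop.
Hypothesis HJ : ideal_in S J.

Lemma ideal_sub x : J x -> S x. Proof. by case: HJ => H _; apply: H. Qed.
Lemma ideal0 : J 0. Proof. by case: HJ => _ []. Qed.
Lemma idealD x y : J x -> J y -> J (x + y). Proof. by case: HJ => _ [_ [H _]]; apply: H. Qed.
Lemma idealMl r x : S r -> J x -> J (r * x). Proof. by case: HJ => _ [_ [_ H]]; apply: H. Qed.

Lemma idealN x : J x -> J (- x).
Proof.
by move=> Jx; rewrite -mulN1r; apply: idealMl => //; case: HS => _ S1 _ _ SN; apply: SN.
Qed.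

Lemma idealB x y : J x -> J y -> J (x - y).
Proof. by move=> Jx Jy; apply: idealD => //; apply: idealN. Qed.

Lemma ideal_sum n (F : 'I_n -> R) : (forall k, J (F k)) -> J (\sum_(k < n) F k).
Proof. by move=> JF; apply: (big_ind J) => //; [apply: ideal0 | apply: idealD]. Qed.

Lemma scaled_ideal s : S s -> ideal_in S (fun x => exists2 t, J t & x = s * t).
Proof.
move=> Ss; split; [|split; [|split]].
- by move=> _ [t Jt ->]; apply: subringM => //; apply: ideal_sub.
- by exists 0; [apply: ideal0 | rewrite mulr0].
- by move=> _ _ [t Jt ->] [u Ju ->]; exists (t + u); [apply: idealD | rewrite mulrDr].
- by move=> r _ Sr [t Jt ->]; exists (r * t); [apply: idealMl | rewrite mulrCA].
Qed.

End Ideal.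

Lemma gen_ideal_ideal g : (forall k, (k < size g)%N -> S g`_k) ->
  ideal_in S (gen_ideal g).
Proof.
move=> Sg; case: HS => S0 S1 SD SM SN.
split; [|split; [|split]].
- move=> x [c [Hc [Sc ->]]]; apply: subring_sum => k.
  by apply: SM; [apply: Sc; rewrite Hc | apply: Sg].
- exists (nseq (size g) 0); rewrite size_nseq; split => //; split.
    by move=> k Hk; rewrite nth_nseq Hk.
  by rewrite big1 // => k _; rewrite nth_nseq ltn_ord mul0r.
- move=> x y [c [Hc [Sc ->]]] [d [Hd [Sd ->]]].
  exists (mkseq (fun k => c`_k + d`_k) (size g)); rewrite size_mkseq.
  split => //; split.
    move=> k Hk; rewrite nth_mkseq //.
    by apply: SD; [apply: Sc; rewrite Hc | apply: Sd; rewrite Hd].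
  by rewrite -big_split /=; apply: eq_bigr => k _; rewrite nth_mkseq // mulrDl.
- move=> r x Sr [c [Hc [Sc ->]]].
  exists (mkseq (fun k => r * c`_k) (size g)); rewrite size_mkseq.
  split => //; split.
    by move=> k Hk; rewrite nth_mkseq //; apply: SM => //; apply: Sc; rewrite Hc.
  by rewrite mulr_sumr; apply: eq_bigr => k _; rewrite nth_mkseq // mulrA.
Qed.

Lemma gen_ideal_mem g k : (k < size g)%N -> gen_ideal g g`_k.
Proof.
move=> Hk; case: HS => S0 S1 _ _ _.
exists (mkseq (fun l => if l == k then 1 else 0) (size g)); rewrite size_mkseq.
split => //; split; first by move=> l Hl; rewrite nth_mkseq //; case: ifP.
rewrite (bigD1 (Ordinal Hk)) //= nth_mkseq // eqxx mul1r big1 ?addr0 // => l Hl.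
rewrite nth_mkseq //; case: eqP => [El|]; last by rewrite mul0r.
by move/eqP: Hl; case; apply/val_inj.
Qed.

Lemma regular_divisor y z w : regular_in S y -> S z -> y = z * w -> regular_in S z.
Proof.
move=> [_ Hy] Sz Ey; split=> // u Su zu.
by apply: Hy => //; rewrite Ey mulrAC zu mul0r.
Qed.

Lemma principal_invertible J z : ideal_in S J -> generates_in z J ->
  regular_ideal_in S J -> invertible_in S J.
Proof.
move=> HJ [Jz Hz] [x [Jx Rx]].
have [c [_ Ex]] := Hz x Jx.
exists z; split; first exact: regular_divisor Rx (ideal_sub HJ Jz) Ex.
exists [:: z], [:: 1]; split => //; split.
  move=> k; rewrite ltnS leqn0 => /eqP -> /=; split => //; split; first by case: HS.
  by move=> i /Hz [t [St ->]]; exists t; rewrite mul1r.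
by rewrite big_ord_recl big_ord0 /= mulr1 addr0.
Qed.

Section Local.
Variable M : R -> Prop.
Hypothesis HM : local_in M.

Lemma regular_neq_mul_max s t : regular_in S s -> M t -> s <> s * t.
Proof.
case: HM => HMi M1 _ [Ss Hs] Mt Est; apply: M1.
have St : S t by apply: ideal_sub HMi _ Mt.
have E : 1 - t = 0.
  by apply: Hs; [apply: subringB; case: HS | rewrite mulrBr mulr1 -Est subrr].
by move/eqP: E; rewrite subr_eq0 => /eqP ->.
Qed.

Lemma generates_unit_mul J z y t :
  generates_in z J -> J y -> S t -> ~ M t -> y = z * t -> generates_in y J.
Proof.
case: HM => _ _ Munit [Jz Hz] Jy St Mt Ey.
have [u Su tu] := Munit t St Mt.
split=> // w /Hz [v [Sv ->]].
exists (u * v); split; first exact: subringM.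
by rewrite Ey -mulrA (mulrA t) tu mul1r.
Qed.

Lemma invertible_local_principal J :
  ideal_in S J -> invertible_in S J -> exists z, generates_in z J.
Proof.
move=> HJ [s [Rs [a [r [_ [Hak Hsum]]]]]].
have [HMi _ Munit] := HM; have [Ss Hs] := Rs.
have [k ltka [t [St Mt Et]]] : exists2 k, (k < size a)%N &
    exists t, [/\ S t, ~ M t & r`_k * a`_k = s * t].
  apply: NNPP => Hno.
  have [T MT ET] : exists2 T, M T & \sum_(k < size a) a`_k * r`_k = s * T.
    apply: (ideal_sum (scaled_ideal HMi Ss)) => k.
    have [Jak [_ Hrk]] := Hak k (ltn_ord k).
    have [t [St Et]] := Hrk _ Jak.
    exists t; last by rewrite mulrC.
    by apply: NNPP => Mt; apply: Hno; exists k => //; exists t.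
  by apply: (regular_neq_mul_max Rs MT); rewrite -ET.
have [Jak [Srk Hrk]] := Hak k ltka.
have [u Su tu] := Munit t St Mt.
exists a`_k; split=> // w Jw.
have [v [Sv Ev]] := Hrk w Jw.
exists (v * u); split; first exact: subringM.
have twE : t * w = a`_k * v.
  have [Sw Sak] := (ideal_sub HJ Jw, ideal_sub HJ Jak).
  apply/eqP; rewrite -subr_eq0; apply/eqP; apply: Hs.
    by apply: subringB; apply: subringM.
  by rewrite mulrBr mulrA -Et (mulrC r`_k) -mulrA Ev mulrCA subrr.
by rewrite mulrA -twE mulrAC tu mul1r.
Qed.

Lemma principal_gen_ideal_generator g z : (forall k, (k < size g)%N -> S g`_k) ->
  regular_ideal_in S (gen_ideal g) -> generates_in z (gen_ideal g) ->
  exists2 k, (k < size g)%N & generates_in g`_k (gen_ideal g).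
Proof.
move=> Sg [y [Jy Ry]] zJ; have [Jz Hz] := zJ.
have HJ := gen_ideal_ideal Sg; have Sz := ideal_sub HJ Jz.
have [w [_ Ey]] := Hz y Jy.
have Rz := regular_divisor Ry Sz Ey.
have [HMi _ _] := HM; have [c [Hc [Sc Ez]]] := Jz.
apply: NNPP => Hno.
have [T MT ET] : exists2 T, M T & z = z * T.
  rewrite {1}Ez; apply: (ideal_sum (scaled_ideal HMi Sz)) => k.
  have [t [St Et]] := Hz _ (gen_ideal_mem (ltn_ord k)).
  exists (c`_k * t); last by rewrite Et mulrCA.
  apply: (idealMl HMi); first by apply: Sc; rewrite Hc.
  apply: NNPP => Mt; apply: Hno; exists k => //.
  exact: generates_unit_mul zJ (gen_ideal_mem (ltn_ord k)) St Mt Et.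
exact: regular_neq_mul_max Rz MT ET.
Qed.

Lemma Prufer_local_generator g : Prufer_in S -> (forall k, (k < size g)%N -> S g`_k) ->
  regular_ideal_in S (gen_ideal g) ->
  exists2 k, (k < size g)%N & generates_in g`_k (gen_ideal g).
Proof.
move=> HP Sg Hreg; have HJ := gen_ideal_ideal Sg.
have [z Hz] := invertible_local_principal HJ
  (HP _ HJ (ex_intro _ g (conj Sg (fun=> iff_refl _))) Hreg).
exact: principal_gen_ideal_generator Hz.
Qed.

End Local.
End SubringIdeals.

Lemma whole_subring (R : comNzRingType) : subring (@whole R).
Proof. by []. Qed.

Lemma local_whole (R : comNzRingType) (m : R -> Prop) :
  ideal_in (@whole R) m -> ~ m 1 -> (forall x, ~ m x -> is_unit x) ->
  local_in (@whole R) m.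
Proof. by move=> Hm Hm1 Hmu; split=> // x _ /Hmu [y Hy]; exists y. Qed.

Lemma regular_whole_iff (R : comNzRingType) (a : R) :
  regular_in (@whole R) a <-> ~ zero_divisor_in (@whole R) a.
Proof.
split=> [[_ Ha] [_ [y [_ [y0 ay]]]] | Hz]; first exact: y0 (Ha y Logic.I ay).
split=> // y _ ay; apply: NNPP => y0; apply: Hz; split=> //; by exists y.
Qed.

Lemma fst_sum (U V : nmodType) n (F : 'I_n -> U * V) :
  (\sum_(k < n) F k).1 = \sum_(k < n) (F k).1.
Proof. exact: (big_morph fst). Qed.

Lemma snd_sum (U V : nmodType) n (F : 'I_n -> U * V) :
  (\sum_(k < n) F k).2 = \sum_(k < n) (F k).2.
Proof. exact: (big_morph snd). Qed.

Lemma pairE (U V : Type) (p q : U * V) : p.1 = q.1 -> p.2 = q.2 -> p = q.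
Proof. by case: p q => ? ? [? ?] /= -> ->. Qed.

Section AmalgamatedDuplication.
Variables (A : comNzRingType) (I : A -> Prop).
Hypothesis HI : ideal_in (@whole A) I.
Local Notation D := (amal_dup I).

Lemma amal_dupP p : D p <-> I (p.2 - p.1).
Proof.
split=> [[a [i [Ii ->]]] | Ip]; first by rewrite /= addrC addKr.
by exists p.1, (p.2 - p.1); split=> //; case: p {Ip} => a b /=; rewrite addrC subrK.
Qed.

Lemma amal_dup_diag x : D (x, x).
Proof. by apply/amal_dupP; rewrite subrr; apply: ideal0 HI. Qed.

Lemma amal_dup_subring : subring D.
Proof.
split; [exact: amal_dup_diag | exact: amal_dup_diag | | |].
- move=> x y /amal_dupP Ix /amal_dupP Iy; apply/amal_dupP => /=.
  have -> : x.2 + y.2 - (x.1 + y.1) = (x.2 - x.1) + (y.2 - y.1) by ring.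
  exact: idealD HI _ _ Ix Iy.
- move=> x y /amal_dupP Ix /amal_dupP Iy; apply/amal_dupP => /=.
  have -> : x.2 * y.2 - x.1 * y.1 = x.2 * (y.2 - y.1) + y.1 * (x.2 - x.1) by ring.
  by apply: (idealD HI); apply: (idealMl HI).
- move=> x /amal_dupP Ix; apply/amal_dupP => /=.
  have -> : - x.2 - - x.1 = - (x.2 - x.1) by ring.
  exact: (idealN (whole_subring A) HI).
Qed.

Lemma regular_amal_dup_fst X : regular_in D X -> regular_in (@whole A) X.1.
Proof.
move=> [DX HX]; split=> // b _ Xb.
have /amal_dupP Ij := DX; set j := X.2 - X.1 in Ij.
have jb : j * b = 0.
  have : (j * b, 0) = 0 :> A * A.
    apply: HX.
      apply/amal_dupP; rewrite /= sub0r mulrC.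
      by apply: (idealN (whole_subring A) HI); apply: (idealMl HI).
    by apply: pairE; rewrite /= ?mulr0 // mulrCA Xb mulr0.
  by move/(congr1 fst).
have : (b, b) = 0 :> A * A.
  apply: HX; first exact: amal_dup_diag.
  have X2 : X.2 = X.1 + j by rewrite /j addrCA subrr addr0.
  by apply: pairE => //=; rewrite X2 mulrDl Xb jb addr0.
by move/(congr1 fst).
Qed.

Lemma regular_amal_dup_diag x : regular_in (@whole A) x -> regular_in D (x, x).
Proof.
move=> [_ Hx]; split=> [|p _ xp]; first exact: amal_dup_diag.
by apply: pairE; apply: Hx => //; [move/(congr1 fst): xp | move/(congr1 snd): xp].
Qed.

Lemma gen_ideal_amal_dup_fst G W :
  gen_ideal D G W -> gen_ideal (@whole A) (map fst G) W.1.
Proof.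
move=> [c [Hc [_ ->]]]; exists (map fst c); rewrite !size_map; split=> //; split=> //.
rewrite fst_sum; apply: eq_bigr => k _ /=.
by rewrite (nth_map 0) ?Hc // (nth_map 0).
Qed.

Lemma gen_ideal_amal_dup_diag g w :
  gen_ideal (@whole A) g w -> gen_ideal D [seq (y, y) | y <- g] (w, w).
Proof.
move=> [c [Hc [_ ->]]]; exists [seq (y, y) | y <- c]; rewrite !size_map.
split=> //; split=> [k Hk|]; first by rewrite (nth_map 0) ?size_map //; apply: amal_dup_diag.
apply: pairE => /=; [rewrite fst_sum | rewrite snd_sum]; apply: eq_bigr => k _ /=;
  by rewrite (nth_map 0) ?Hc // (nth_map 0).
Qed.

Variable m : A -> Prop.
Hypothesis Hm : local_in (@whole A) m.
Hypothesis HI1 : ~ I 1.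

Definition max_regular_divisible :=
  forall a, m a -> regular_in (@whole A) a -> forall x, I x -> exists2 y, I y & x = a * y.

Lemma proper_ideal_sub_max x : I x -> m x.
Proof.
have [_ _ Munit] := Hm; move=> Ix; apply: NNPP => mx.
have [y _ xy] := Munit x Logic.I mx.
by apply: HI1; rewrite -xy mulrC; apply: (idealMl HI).
Qed.

Definition amal_dup_max (p : A * A) := D p /\ m p.1.

Lemma amal_dup_local : local_in D amal_dup_max.
Proof.
have [HmI m1 Munit] := Hm; have DS := amal_dup_subring.
split; [split; [by move=> x [] | split; [|split]] | by move=> [_ /m1] | ].
- by split; [exact: amal_dup_diag | exact: ideal0 HmI].
- by move=> x y [Dx mx] [Dy my]; split; [apply: subringD | apply: (idealD HmI)].
- by move=> r x Dr [Dx mx]; split; [apply: subringM | apply: (idealMl HmI)].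
move=> p Dp mp; have /amal_dupP Ij := Dp.
have [y1 _ py1] := Munit p.1 Logic.I (fun h => mp (conj Dp h)).
have m2 : ~ m p.2.
  move=> h; apply: mp; split=> //.
  rewrite (_ : p.1 = p.2 - (p.2 - p.1)); last by ring.
  by apply: (idealB (whole_subring A) HmI) => //; apply: proper_ideal_sub_max.
have [y2 _ py2] := Munit p.2 Logic.I m2.
exists (y1, y2); last by apply: pairE.
apply/amal_dupP => /=.
have -> : y2 - y1 = (y1 * y2) * (p.1 - p.2).
  have -> : y1 * y2 * (p.1 - p.2) = y2 * (p.1 * y1) - y1 * (p.2 * y2) by ring.
  by rewrite py1 py2 !mulr1.
rewrite -opprB mulrN; apply: (idealN (whole_subring A) HI); exact: (idealMl HI).
Qed.

Lemma amal_dup_Prufer_fst : Prufer_in D -> Prufer A.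
Proof.
move=> HP J HJ [g [_ HJg]] [x [Jx Rx]].
pose g' := [seq (y, y) | y <- g].
have Dg' : forall k, (k < size g')%N -> D g'`_k.
  by move=> k; rewrite size_map => lt_k; rewrite (nth_map 0) //; apply: amal_dup_diag.
have [k lt_k [_ Hgk]] := Prufer_local_generator amal_dup_subring amal_dup_local HP Dg'
  (ex_intro _ (x, x) (conj (gen_ideal_amal_dup_diag ((HJg x).1 Jx))
                            (regular_amal_dup_diag Rx))).
rewrite size_map in lt_k; rewrite (nth_map 0) // in Hgk.
apply: (principal_invertible (whole_subring A) HJ (z := g`_k)); last by exists x.
split=> [|w /HJg /gen_ideal_amal_dup_diag /Hgk [t [_ /(congr1 fst) wt]]]; last by exists t.1.
by apply/HJg; apply: gen_ideal_mem (whole_subring A) _ _ lt_k.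
Qed.

Lemma amal_dup_Prufer_divisible : Prufer_in D ->
  forall a, regular_in (@whole A) a -> forall x, I x -> exists2 y, I y & x = a * y.
Proof.
move=> HP a Ra x Ix; have [_ Ha] := Ra.
pose g := [:: (a, a); (0, x)].
have Dg : forall k, (k < size g)%N -> D g`_k.
  by case=> [|[|k]] // _; [apply: amal_dup_diag | apply/amal_dupP; rewrite /= subr0].
have gen0 := gen_ideal_mem amal_dup_subring (isT : (0 < size g)%N).
have gen1 := gen_ideal_mem amal_dup_subring (isT : (1 < size g)%N).
have [[|[|//]] _ [_ Hgk]] := Prufer_local_generator amal_dup_subring amal_dup_local HP Dg
  (ex_intro _ (a, a) (conj gen0 (regular_amal_dup_diag Ra))).
- have [t [Dt E]] := Hgk _ gen1.
  have t10 : t.1 = 0 by apply: Ha => //; move/(congr1 fst): E.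
  exists t.2; last by move/(congr1 snd): E.
  by move/amal_dupP: Dt; rewrite t10 subr0.
- have [t [_ /(congr1 fst) /= a0]] := Hgk _ gen0.
  have : (1 : A) = 0 by apply: Ha => //; rewrite a0 !mul0r.
  by move/eqP; rewrite oner_eq0.
Qed.

Lemma ideal_divisible_by_shift a b : max_regular_divisible ->
  regular_in (@whole A) a -> I (b - a) -> forall i, I i -> exists2 i', I i' & i = b * i'.
Proof.
move=> Hdiv Ra Ij i Ii; have [HmI m1 Munit] := Hm.
have Eb : b = a + (b - a) by rewrite addrCA subrr addr0.
case: (classic (m a)) => [ma | nma].
- have [f If ->] := Hdiv a ma Ra i Ii.
  have [e Ie Ee] := Hdiv a ma Ra _ Ij.
  have n1e : ~ m (1 + e).
    move=> h; apply: m1; rewrite -(addrK e 1).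
    by apply: (idealB (whole_subring A) HmI) => //; apply: proper_ideal_sub_max.
  have [v _ ev] := Munit _ Logic.I n1e.
  exists (v * f); first exact: (idealMl HI).
  rewrite Eb Ee.
  have -> : (a + a * e) * (v * f) = a * f * ((1 + e) * v) by ring.
  by rewrite ev mulr1.
- have nmb : ~ m b.
    move=> h; apply: nma; rewrite (_ : a = b - (b - a)); last by ring.
    by apply: (idealB (whole_subring A) HmI) => //; apply: proper_ideal_sub_max.
  have [v _ bv] := Munit _ Logic.I nmb.
  by exists (v * i); [apply: (idealMl HI) | rewrite mulrA bv mul1r].
Qed.

Lemma Prufer_amal_dup : Prufer A -> max_regular_divisible -> Prufer_in D.
Proof.
move=> HPA Hdiv J HJ [G [DG HJG]] [X [JX RX]].
have fstJ W : J W -> gen_ideal (@whole A) (map fst G) W.1.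
  by move=> /HJG; apply: gen_ideal_amal_dup_fst.
have [k lt_k [_ Hgk]] := Prufer_local_generator (whole_subring A) Hm HPA (g := map fst G)
  (fun _ _ => Logic.I) (ex_intro _ X.1 (conj (fstJ X JX) (regular_amal_dup_fst RX))).
rewrite size_map in lt_k; rewrite (nth_map 0) // in Hgk.
have /amal_dupP IZ := DG k lt_k.
have RZ1 : regular_in (@whole A) (G`_k).1.
  have [t [_ Et]] := Hgk _ (fstJ X JX).
  exact: regular_divisor (regular_amal_dup_fst RX) Logic.I Et.
apply: (principal_invertible amal_dup_subring HJ (z := G`_k)); last by exists X.
split=> [|W JW]; first by apply/HJG; apply: gen_ideal_mem amal_dup_subring _ _ lt_k.
have [t [_ Wt]] := Hgk _ (fstJ W JW).
have /amal_dupP IW := ideal_sub HJ JW.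
have Ir : I (W.2 - (G`_k).2 * t).
  have -> : W.2 - (G`_k).2 * t = (W.2 - W.1) - t * ((G`_k).2 - (G`_k).1).
    by rewrite Wt; ring.
  by apply: (idealB (whole_subring A) HI) => //; apply: (idealMl HI).
have [i' Ii' Ei'] := ideal_divisible_by_shift Hdiv RZ1 IZ Ir.
exists (t, t + i'); split; first by apply/amal_dupP; rewrite /= addrC addKr.
by apply: pairE => //=; rewrite mulrDr -Ei' addrCA subrr addr0.
Qed.

End AmalgamatedDuplication.

Theorem corollary2p7 (A : comNzRingType) (m I : A -> Prop) :
  (* (A, m) is a local ring with maximal ideal m *)
  ideal_in (@whole A) m -> ~ m 1 -> (forall x, ~ m x -> is_unit x) ->
  (* I is a proper ideal of A *)
  ideal_in (@whole A) I -> ~ I 1 ->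
  (Prufer_in (amal_dup I) <->
   @Prufer A /\
   (forall a, m a -> ~ zero_divisor_in (@whole A) a ->
      forall x, I x <-> exists y, I y /\ x = a * y)).
Proof.
move=> Hm Hm1 Hmu HI HI1; have Hloc := local_whole Hm Hm1 Hmu.
split=> [HP | [HPA Hdiv]].
  split; first exact: (amal_dup_Prufer_fst HI Hloc HI1 HP).
  move=> a _ /regular_whole_iff Ra x; split=> [Ix | [y [Iy ->]]].
    by have [y Iy ->] := amal_dup_Prufer_divisible HI Hloc HI1 HP Ra Ix; exists y.
  exact: (idealMl HI).
apply: (Prufer_amal_dup HI Hloc HI1 HPA) => a ma /regular_whole_iff Ra x Ix.
by have [y [Iy ->]] := (Hdiv a ma Ra x).1 Ix; exists y.
Qed.
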